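(* Let $\mathbb C$ be a pointed category with finite limits and finite colimits. The forgetful functor $\mathsf{MCS}_W(\mathbb C)\to\mathsf{CS}_W(\mathbb C)$ has a left adjoint, which sends a weighted cospan $C=(A,X,x,Y,y,W,w)$ to $((\tilde C,X,\nu_Cx,Y,\nu_Cy,W,\nu_Cw),\mu_C)$, where $$\begin{array}{ccc} W+X+Y & \xrightarrow{[w,x,y]} & A\\ \downarrow{\scriptstyle\langle [\iota_1,\iota_2,0],[\iota_1,0,\iota_2]\rangle} & & \downarrow{\scriptstyle \nu_C}\\ (W+X)\times_W(W+Y) & \xrightarrow{\mu_C} & \tilde C\end{array}$$ is a pushout; the $C$-component of the unit of the adjunction consists of the identity morphisms of $X$, $Y$, $W$ and the morphism $\nu_C\colon A\to\tilde C$.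
   Context: Notation: $\iota_i$ coproduct injections, $[a,b]$, $[a,b,c]$ copairings, $\langle a,b\rangle$ pairing; $(W+X)\times_W(W+Y)$ is the pullback of $[1,0]\colon W+X\to W$ and $[1,0]\colon W+Y\to W$. A weighted cospan $(A,X,x,Y,y,W,w)$ consists of morphisms $w\colon W\to A$, $x\colon X\to A$, $y\colon Y\to A$; a morphism of weighted cospans $(A,X,x,Y,y,W,w)\to(A',X',x',Y',y',W',w')$ is a quadruple of morphisms $a\colon A\to A'$, $f\colon X\to X'$, $g\colon Y\to Y'$, $h\colon W\to W'$ with $af=$ ... precisely $x'f=ax$, $y'g=ay$, $w'h=aw$; these form the category $\mathsf{CS}_W(\mathbb C)$. An internal multiplication $X\times Y\to A$ over $(W,w)$ is a morphism $m\colon (W+X)\times_W(W+Y)\to A$ with $m\langle 1,\iota_1[1,0]\rangle=[w,x]$ and $m\langle \iota_1[1,0],1\rangle=[w,y]$. A multiplicative weighted cospan is a pair $(C,m)$ with $C$ a weighted cospan and $m$ such an internal multiplication; a morphism $(C,m)\to(C',m')$ is a morphism $(a,f,g,h)$ of weighted cospans with $am=m'\circ((h+f)\times_h(h+g))$. These form the category $\mathsf{MCS}_W(\mathbb C)$, with the forgetful functor $(C,m)\mapsto C$. *)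

Set Implicit Arguments.
Unset Strict Implicit.

Record Cat := {
  ob :> Type;
  hom : ob -> ob -> Type;
  comp : forall a b c, hom b c -> hom a b -> hom a c;
  idm : forall a, hom a a;
  comp_assoc : forall a b c d (h : hom c d) (g : hom b c) (f : hom a b),
      comp h (comp g f) = comp (comp h g) f;
  comp_id_l : forall a b (f : hom a b), comp (idm b) f = f;
  comp_id_r : forall a b (f : hom a b), comp f (idm a) = f
}.
Arguments hom {c0} _ _.
Arguments comp {c0 a b c} _ _.
Arguments idm {c0} _.
Notation "g ∘ f" := (comp g f) (at level 40, left associativity).

Definition is_pushout (C : Cat) (a b c p : C) (f : hom c a) (g : hom c b)
  (i1 : hom a p) (i2 : hom b p) : Prop :=
  i1 ∘ f = i2 ∘ g /\
  forall (t : C) (u : hom a t) (v : hom b t), u ∘ f = v ∘ g ->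
    exists! r : hom p t, r ∘ i1 = u /\ r ∘ i2 = v.

(* A pointed category with finite limits and finite colimits:
   a zero object, chosen binary coproducts, chosen pullbacks (these, with the
   zero object as terminal object, give all finite limits) and pushouts (these,
   with the zero object as initial object, give all finite colimits).
   The pullback pairing is given as a total operation, specified on
   compatible pairs (where it is the usual pairing <u,v>). *)
Record PFLC (C : Cat) := {
  zo : C;
  to_zo : forall a : C, hom a zo;
  to_zo_uniq : forall (a : C) (f : hom a zo), f = to_zo a;
  from_zo : forall a : C, hom zo a;
  from_zo_uniq : forall (a : C) (f : hom zo a), f = from_zo a;
  cp : C -> C -> C;
  in1 : forall a b : C, hom a (cp a b);
  in2 : forall a b : C, hom b (cp a b);
  copair : forall (a b c : C), hom a c -> hom b c -> hom (cp a b) c;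
  copair_in1 : forall (a b c : C) (f : hom a c) (g : hom b c),
      copair f g ∘ in1 a b = f;
  copair_in2 : forall (a b c : C) (f : hom a c) (g : hom b c),
      copair f g ∘ in2 a b = g;
  copair_uniq : forall (a b c : C) (f : hom a c) (g : hom b c) (h : hom (cp a b) c),
      h ∘ in1 a b = f -> h ∘ in2 a b = g -> h = copair f g;
  pb : forall (a b c : C), hom a c -> hom b c -> C;
  pr1 : forall (a b c : C) (f : hom a c) (g : hom b c), hom (pb f g) a;
  pr2 : forall (a b c : C) (f : hom a c) (g : hom b c), hom (pb f g) b;
  pb_comm : forall (a b c : C) (f : hom a c) (g : hom b c),
      f ∘ pr1 f g = g ∘ pr2 f g;
  pair : forall (a b c : C) (f : hom a c) (g : hom b c) (t : C),
      hom t a -> hom t b -> hom t (pb f g);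
  pair_pr1 : forall (a b c : C) (f : hom a c) (g : hom b c) (t : C)
      (u : hom t a) (v : hom t b), f ∘ u = g ∘ v -> pr1 f g ∘ pair f g u v = u;
  pair_pr2 : forall (a b c : C) (f : hom a c) (g : hom b c) (t : C)
      (u : hom t a) (v : hom t b), f ∘ u = g ∘ v -> pr2 f g ∘ pair f g u v = v;
  pair_uniq : forall (a b c : C) (f : hom a c) (g : hom b c) (t : C)
      (u : hom t a) (v : hom t b) (k : hom t (pb f g)),
      f ∘ u = g ∘ v -> pr1 f g ∘ k = u -> pr2 f g ∘ k = v -> k = pair f g u v;
  has_pushouts : forall (a b c : C) (f : hom c a) (g : hom c b),
      exists (p : C) (i1 : hom a p) (i2 : hom b p), is_pushout f g i1 i2
}.
Arguments zo {C} K : rename.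
Arguments to_zo {C} K a : rename.
Arguments from_zo {C} K a : rename.
Arguments cp {C} K a b : rename.
Arguments in1 {C} K a b : rename.
Arguments in2 {C} K a b : rename.
Arguments copair {C} K {a b c} f g : rename.
Arguments pb {C} K {a b c} f g : rename.
Arguments pr1 {C} K {a b c} f g : rename.
Arguments pr2 {C} K {a b c} f g : rename.
Arguments pair {C} K {a b c} f g {t} u v : rename.

Section WCS.
Context {C : Cat} (K : PFLC C).

Definition zm (a b : C) : hom a b := from_zo K b ∘ to_zo K a.

Definition codiag (W X : C) : hom (cp K W X) W := copair K (idm W) (zm X W).

Definition PBo (W X Y : C) : C := pb K (codiag W X) (codiag W Y).
Definition PBpair (W X Y t : C) (u : hom t (cp K W X)) (v : hom t (cp K W Y))
  : hom t (PBo W X Y) := pair K (codiag W X) (codiag W Y) u v.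
Definition PBpr1 (W X Y : C) : hom (PBo W X Y) (cp K W X) :=
  pr1 K (codiag W X) (codiag W Y).
Definition PBpr2 (W X Y : C) : hom (PBo W X Y) (cp K W Y) :=
  pr2 K (codiag W X) (codiag W Y).

Definition cp3 (a b c : C) : C := cp K (cp K a b) c.
Definition in31 (a b c : C) : hom a (cp3 a b c) := in1 K (cp K a b) c ∘ in1 K a b.
Definition in32 (a b c : C) : hom b (cp3 a b c) := in1 K (cp K a b) c ∘ in2 K a b.
Definition in33 (a b c : C) : hom c (cp3 a b c) := in2 K (cp K a b) c.
Definition copair3 (a b c d : C) (f : hom a d) (g : hom b d) (h : hom c d)
  : hom (cp3 a b c) d := copair K (copair K f g) h.

Definition sum_map (W X W' X' : C) (h : hom W W') (f : hom X X')
  : hom (cp K W X) (cp K W' X') := copair K (in1 K W' X' ∘ h) (in2 K W' X' ∘ f).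

Definition pbmap (W X Y W' X' Y' : C) (h : hom W W') (f : hom X X') (g : hom Y Y')
  : hom (PBo W X Y) (PBo W' X' Y') :=
  PBpair (sum_map h f ∘ PBpr1 W X Y) (sum_map h g ∘ PBpr2 W X Y).

Definition sqL (W X Y : C) : hom (cp3 W X Y) (PBo W X Y) :=
  PBpair (copair3 (in1 K W X) (in2 K W X) (zm Y (cp K W X)))
         (copair3 (in1 K W Y) (zm X (cp K W Y)) (in2 K W Y)).

End WCS.

Record wcs (C : Cat) := {
  cA : C; cX : C; cx : hom cX cA; cY : C; cy : hom cY cA; cW : C; cw : hom cW cA
}.

Record wcs_hom (C : Cat) (D E : wcs C) := {
  ha : hom (cA D) (cA E);
  hf : hom (cX D) (cX E);
  hg : hom (cY D) (cY E);
  hh : hom (cW D) (cW E);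
  hx : cx E ∘ hf = ha ∘ cx D;
  hy : cy E ∘ hg = ha ∘ cy D;
  hw : cw E ∘ hh = ha ∘ cw D
}.

Lemma comp_sq (C : Cat) (a b a' b' a'' b'' : C) (x : hom a b) (x' : hom a' b')
  (f1 : hom a a') (a1 : hom b b') (x'' : hom a'' b'') (f2 : hom a' a'') (a2 : hom b' b'') :
  x' ∘ f1 = a1 ∘ x -> x'' ∘ f2 = a2 ∘ x' -> x'' ∘ (f2 ∘ f1) = (a2 ∘ a1) ∘ x.
Proof.
  intros H1 H2. rewrite comp_assoc, H2, <- comp_assoc, H1, comp_assoc. reflexivity.
Qed.

Definition wcs_comp (C : Cat) (D E F : wcs C) (v : wcs_hom E F) (u : wcs_hom D E)
  : wcs_hom D F :=
  {| ha := ha v ∘ ha u; hf := hf v ∘ hf u; hg := hg v ∘ hg u; hh := hh v ∘ hh u;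
     hx := comp_sq (hx u) (hx v); hy := comp_sq (hy u) (hy v);
     hw := comp_sq (hw u) (hw v) |}.

Arguments PBpair {C} K {W X Y t} u v.
Section MCS.
Context {C : Cat} (K : PFLC C).

Definition is_mult (D : wcs C) (m : hom (PBo K (cW D) (cX D) (cY D)) (cA D)) : Prop :=
  m ∘ PBpair K (idm (cp K (cW D) (cX D)))
               (in1 K (cW D) (cY D) ∘ codiag K (cW D) (cX D))
    = copair K (cw D) (cx D) /\
  m ∘ PBpair K (in1 K (cW D) (cX D) ∘ codiag K (cW D) (cY D))
               (idm (cp K (cW D) (cY D)))
    = copair K (cw D) (cy D).

Record mcs := {
  mc : wcs C;
  mm : hom (PBo K (cW mc) (cX mc) (cY mc)) (cA mc);
  mok : @is_mult mc mm
}.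

Record mcs_hom (M N : mcs) := {
  mw : wcs_hom (mc M) (mc N);
  mcomm : ha mw ∘ mm M = mm N ∘ pbmap K (hh mw) (hf mw) (hg mw)
}.

End MCS.
Arguments is_mult {C} K D m.
Arguments mcs {C} K.
Arguments Build_mcs {C K mc mm} mok.
Arguments mcs_hom {C K} M N.
Arguments mw {C K M N} m.

(* A multiplicative structure on a weighted cospan is the same thing as a map
   [m] out of (W+X) x_W (W+Y) with [m ∘ sqL = [w,x,y]], i.e. a cocone on the
   span formed by [sqL] and [[w,x,y]].  Since [sqL] is natural and morphisms of
   multiplicative cospans are compatible with the multiplications, a morphism
   [u : D -> M] of weighted cospans yields such a cocone
   [(m_M ∘ ((h+f) x_h (h+g)), ha u)]; the pushout therefore factors it
   uniquely through [(mu, nu)], which is the universal property of the unit. *)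
From Stdlib Require Import ProofIrrelevance.

Set Implicit Arguments.
Unset Strict Implicit.

Section Coproducts.
Context {C : Cat} (K : PFLC C).

Lemma copair_comp (a b c d : C) (f : hom a c) (g : hom b c) (h : hom c d) :
  h ∘ copair K f g = copair K (h ∘ f) (h ∘ g).
Proof.
  apply copair_uniq; rewrite <- comp_assoc;
    [rewrite copair_in1 | rewrite copair_in2]; reflexivity.
Qed.

Lemma copair_id (a b : C) : copair K (in1 K a b) (in2 K a b) = idm (cp K a b).
Proof. symmetry; apply copair_uniq; apply comp_id_l. Qed.

Lemma cp_ext (a b c : C) (f g : hom (cp K a b) c) :
  f ∘ in1 K a b = g ∘ in1 K a b -> f ∘ in2 K a b = g ∘ in2 K a b -> f = g.
Proof.
  intros E1 E2. rewrite (copair_uniq E1 E2). symmetry. apply copair_uniq; reflexivity.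
Qed.

Lemma copair3_in1 (a b c d : C) (f : hom a d) (g : hom b d) (h : hom c d) :
  copair3 K f g h ∘ in1 K (cp K a b) c = copair K f g.
Proof. apply copair_in1. Qed.

Lemma copair3_in31 (a b c d : C) (f : hom a d) (g : hom b d) (h : hom c d) :
  copair3 K f g h ∘ in31 K a b c = f.
Proof. unfold copair3, in31. rewrite comp_assoc, !copair_in1. reflexivity. Qed.

Lemma copair3_in32 (a b c d : C) (f : hom a d) (g : hom b d) (h : hom c d) :
  copair3 K f g h ∘ in32 K a b c = g.
Proof. unfold copair3, in32. rewrite comp_assoc, copair_in1, copair_in2. reflexivity. Qed.

Lemma copair3_in33 (a b c d : C) (f : hom a d) (g : hom b d) (h : hom c d) :
  copair3 K f g h ∘ in33 K a b c = h.
Proof. apply copair_in2. Qed.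

Lemma copair3_comp (a b c d e : C) (f : hom a d) (g : hom b d) (h : hom c d)
  (k : hom d e) : k ∘ copair3 K f g h = copair3 K (k ∘ f) (k ∘ g) (k ∘ h).
Proof. unfold copair3, cp3. rewrite !copair_comp. reflexivity. Qed.

Definition sum3_map (a b c a' b' c' : C) (h : hom a a') (f : hom b b') (g : hom c c')
  : hom (cp3 K a b c) (cp3 K a' b' c') :=
  copair3 K (in31 K a' b' c' ∘ h) (in32 K a' b' c' ∘ f) (in33 K a' b' c' ∘ g).

Lemma copair3_sum3_map (a b c a' b' c' d : C) (h : hom a a') (f : hom b b')
  (g : hom c c') (p : hom a' d) (q : hom b' d) (r : hom c' d) :
  copair3 K p q r ∘ sum3_map h f g = copair3 K (p ∘ h) (q ∘ f) (r ∘ g).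
Proof.
  unfold sum3_map. rewrite copair3_comp, !comp_assoc,
    copair3_in31, copair3_in32, copair3_in33. reflexivity.
Qed.

Lemma sum_map_in1 (W X W' X' : C) (h : hom W W') (f : hom X X') :
  sum_map K h f ∘ in1 K W X = in1 K W' X' ∘ h.
Proof. apply copair_in1. Qed.

Lemma sum_map_in2 (W X W' X' : C) (h : hom W W') (f : hom X X') :
  sum_map K h f ∘ in2 K W X = in2 K W' X' ∘ f.
Proof. apply copair_in2. Qed.

End Coproducts.

Section ZeroMorphisms.
Context {C : Cat} (K : PFLC C).

Lemma comp_zm (a b c : C) (h : hom b c) : h ∘ zm K a b = zm K a c.
Proof.
  unfold zm. rewrite comp_assoc, (from_zo_uniq (h ∘ from_zo K b)). reflexivity.
Qed.

Lemma zm_comp (a b c : C) (h : hom a b) : zm K b c ∘ h = zm K a c.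
Proof.
  unfold zm. rewrite <- comp_assoc, (to_zo_uniq (to_zo K b ∘ h)). reflexivity.
Qed.

Lemma codiag_in1 (W X : C) : codiag K W X ∘ in1 K W X = idm W.
Proof. apply copair_in1. Qed.

Lemma codiag_in2 (W X : C) : codiag K W X ∘ in2 K W X = zm K X W.
Proof. apply copair_in2. Qed.

Lemma codiag_sum_map (W X W' X' : C) (h : hom W W') (f : hom X X') :
  codiag K W' X' ∘ sum_map K h f = h ∘ codiag K W X.
Proof.
  apply cp_ext; rewrite <- !comp_assoc.
  - rewrite sum_map_in1, comp_assoc, !codiag_in1, comp_id_l, comp_id_r. reflexivity.
  - rewrite sum_map_in2, comp_assoc, !codiag_in2, comp_zm, zm_comp. reflexivity.
Qed.

End ZeroMorphisms.

Section Pullbacks.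
Context {C : Cat} (K : PFLC C).

Lemma pb_ext (a b c t : C) (f : hom a c) (g : hom b c) (k l : hom t (pb K f g)) :
  pr1 K f g ∘ k = pr1 K f g ∘ l -> pr2 K f g ∘ k = pr2 K f g ∘ l -> k = l.
Proof.
  intros E1 E2.
  assert (El : f ∘ (pr1 K f g ∘ l) = g ∘ (pr2 K f g ∘ l))
    by (rewrite !comp_assoc, pb_comm; reflexivity).
  rewrite (pair_uniq El E1 E2). symmetry. apply pair_uniq; auto.
Qed.

Lemma pair_comp (a b c t s : C) (f : hom a c) (g : hom b c) (u : hom t a)
  (v : hom t b) (k : hom s t) :
  f ∘ u = g ∘ v -> pair K f g u v ∘ k = pair K f g (u ∘ k) (v ∘ k).
Proof.
  intro E. apply pair_uniq.
  - rewrite !comp_assoc, E. reflexivity.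
  - rewrite comp_assoc, pair_pr1; auto.
  - rewrite comp_assoc, pair_pr2; auto.
Qed.

Variables W X Y : C.

Lemma PBpair_comp (t s : C) (u : hom t (cp K W X)) (v : hom t (cp K W Y))
  (k : hom s t) :
  codiag K W X ∘ u = codiag K W Y ∘ v -> PBpair K u v ∘ k = PBpair K (u ∘ k) (v ∘ k).
Proof. apply pair_comp. Qed.

Lemma PBpr1_pair (t : C) (u : hom t (cp K W X)) (v : hom t (cp K W Y)) :
  codiag K W X ∘ u = codiag K W Y ∘ v -> PBpr1 K W X Y ∘ PBpair K u v = u.
Proof. apply pair_pr1. Qed.

Lemma PBpr2_pair (t : C) (u : hom t (cp K W X)) (v : hom t (cp K W Y)) :
  codiag K W X ∘ u = codiag K W Y ∘ v -> PBpr2 K W X Y ∘ PBpair K u v = v.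
Proof. apply pair_pr2. Qed.

Lemma PB_ext (t : C) (k l : hom t (PBo K W X Y)) :
  PBpr1 K W X Y ∘ k = PBpr1 K W X Y ∘ l -> PBpr2 K W X Y ∘ k = PBpr2 K W X Y ∘ l ->
  k = l.
Proof. apply pb_ext. Qed.

End Pullbacks.

Section Square.
Context {C : Cat} (K : PFLC C).

Lemma sqL_compat (W X Y : C) :
  codiag K W X ∘ copair3 K (in1 K W X) (in2 K W X) (zm K Y (cp K W X)) =
  codiag K W Y ∘ copair3 K (in1 K W Y) (zm K X (cp K W Y)) (in2 K W Y).
Proof.
  rewrite !copair3_comp, !codiag_in1, !codiag_in2, !comp_zm. reflexivity.
Qed.

Lemma in1_codiag (W X Y : C) :
  in1 K W Y ∘ codiag K W X = copair K (in1 K W Y) (zm K X (cp K W Y)).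
Proof. unfold codiag. rewrite copair_comp, comp_id_r, comp_zm. reflexivity. Qed.

Lemma sqL_in1 (W X Y : C) :
  sqL K W X Y ∘ in1 K (cp K W X) Y
  = PBpair K (idm (cp K W X)) (in1 K W Y ∘ codiag K W X).
Proof.
  unfold sqL. rewrite PBpair_comp by apply sqL_compat.
  rewrite !copair3_in1, copair_id, in1_codiag. reflexivity.
Qed.

Lemma sqL_in13 (W X Y : C) :
  sqL K W X Y ∘ copair K (in31 K W X Y) (in33 K W X Y)
  = PBpair K (in1 K W X ∘ codiag K W Y) (idm (cp K W Y)).
Proof.
  unfold sqL. rewrite PBpair_comp by apply sqL_compat.
  rewrite !copair_comp, !copair3_in31, !copair3_in33, copair_id, in1_codiag.
  reflexivity.
Qed.

Lemma is_mult_sqL (D : wcs C) (m : hom (PBo K (cW D) (cX D) (cY D)) (cA D)) :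
  is_mult K D m <-> m ∘ sqL K (cW D) (cX D) (cY D) = copair3 K (cw D) (cx D) (cy D).
Proof.
  split.
  - intros [E1 E2]. apply cp_ext.
    + rewrite <- comp_assoc, sqL_in1, E1. symmetry. apply copair3_in1.
    + transitivity (m ∘ (sqL K (cW D) (cX D) (cY D)
                         ∘ copair K (in31 K _ _ _) (in33 K _ _ _)) ∘ in2 K (cW D) (cY D)).
      { rewrite <- !comp_assoc, copair_in2. reflexivity. }
      rewrite sqL_in13, E2, copair_in2. symmetry. apply copair3_in33.
  - intro E. split.
    + rewrite <- sqL_in1, comp_assoc, E. apply copair3_in1.
    + rewrite <- sqL_in13, comp_assoc, E, copair_comp, copair3_in31, copair3_in33.
      reflexivity.
Qed.

Lemma PBpr1_sqL (W X Y : C) :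
  PBpr1 K W X Y ∘ sqL K W X Y = copair3 K (in1 K W X) (in2 K W X) (zm K Y (cp K W X)).
Proof. apply PBpr1_pair, sqL_compat. Qed.

Lemma PBpr2_sqL (W X Y : C) :
  PBpr2 K W X Y ∘ sqL K W X Y = copair3 K (in1 K W Y) (zm K X (cp K W Y)) (in2 K W Y).
Proof. apply PBpr2_pair, sqL_compat. Qed.

Lemma pbmap_compat (W X Y W' X' Y' : C) (h : hom W W') (f : hom X X') (g : hom Y Y') :
  codiag K W' X' ∘ (sum_map K h f ∘ PBpr1 K W X Y)
  = codiag K W' Y' ∘ (sum_map K h g ∘ PBpr2 K W X Y).
Proof.
  rewrite !comp_assoc, !codiag_sum_map, <- !comp_assoc. f_equal. apply pb_comm.
Qed.

Lemma PBpr1_pbmap (W X Y W' X' Y' : C) (h : hom W W') (f : hom X X') (g : hom Y Y') :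
  PBpr1 K W' X' Y' ∘ pbmap K h f g = sum_map K h f ∘ PBpr1 K W X Y.
Proof. apply PBpr1_pair, pbmap_compat. Qed.

Lemma PBpr2_pbmap (W X Y W' X' Y' : C) (h : hom W W') (f : hom X X') (g : hom Y Y') :
  PBpr2 K W' X' Y' ∘ pbmap K h f g = sum_map K h g ∘ PBpr2 K W X Y.
Proof. apply PBpr2_pair, pbmap_compat. Qed.

Lemma pbmap_sqL (W X Y W' X' Y' : C) (h : hom W W') (f : hom X X') (g : hom Y Y') :
  pbmap K h f g ∘ sqL K W X Y = sqL K W' X' Y' ∘ sum3_map K h f g.
Proof.
  apply PB_ext; rewrite !comp_assoc.
  - rewrite PBpr1_pbmap, <- comp_assoc, !PBpr1_sqL, copair3_sum3_map, copair3_comp,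
      sum_map_in1, sum_map_in2, comp_zm, zm_comp.
    reflexivity.
  - rewrite PBpr2_pbmap, <- comp_assoc, !PBpr2_sqL, copair3_sum3_map, copair3_comp,
      sum_map_in1, sum_map_in2, comp_zm, zm_comp.
    reflexivity.
Qed.

End Square.

Lemma wcs_hom_eq (C : Cat) (D E : wcs C) (u v : wcs_hom D E) :
  ha u = ha v -> hf u = hf v -> hg u = hg v -> hh u = hh v -> u = v.
Proof.
  destruct u, v; simpl; intros; subst; f_equal; apply proof_irrelevance.
Qed.

Lemma mcs_hom_eq (C : Cat) (K : PFLC C) (M N : mcs K) (u v : mcs_hom M N) :
  mw u = mw v -> u = v.
Proof.
  destruct u, v; simpl; intros; subst; f_equal; apply proof_irrelevance.
Qed.

Lemma mult_pbmap_sqL (C : Cat) (K : PFLC C) (D : wcs C) (M : mcs K)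
  (u : wcs_hom D (mc M)) :
  mm M ∘ pbmap K (hh u) (hf u) (hg u) ∘ sqL K (cW D) (cX D) (cY D)
  = ha u ∘ copair3 K (cw D) (cx D) (cy D).
Proof.
  rewrite <- comp_assoc, pbmap_sqL, comp_assoc, (proj1 (is_mult_sqL _) (mok M)).
  rewrite copair3_sum3_map, hw, hx, hy, copair3_comp. reflexivity.
Qed.

Section Unit.
Context {C : Cat} (K : PFLC C) (D : wcs C) {Ct : C} (nu : hom (cA D) Ct).

Definition wcs_along : wcs C :=
  {| cA := Ct; cX := cX D; cx := nu ∘ cx D; cY := cY D; cy := nu ∘ cy D;
     cW := cW D; cw := nu ∘ cw D |}.

Definition wcs_unit : wcs_hom D wcs_along :=
  @Build_wcs_hom C D wcs_along nu (idm (cX D)) (idm (cY D)) (idm (cW D))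
    (comp_id_r (nu ∘ cx D)) (comp_id_r (nu ∘ cy D)) (comp_id_r (nu ∘ cw D)).

Lemma wcs_comp_unit (E : wcs C) (v : wcs_hom wcs_along E) (u : wcs_hom D E) :
  wcs_comp v wcs_unit = u <->
  ha v ∘ nu = ha u /\ hf v = hf u /\ hg v = hg u /\ hh v = hh u.
Proof.
  split.
  - intros <-. simpl. rewrite !comp_id_r. auto.
  - intros (Ea & Ef & Eg & Eh). apply wcs_hom_eq; simpl; rewrite ?comp_id_r; assumption.
Qed.

Section Factor.
Variables (E : wcs C) (u : wcs_hom D E) (r : hom Ct (cA E)).
Hypothesis r_nu : r ∘ nu = ha u.

Let factor_sq (Z Z' : C) (z : hom Z (cA D)) (z' : hom Z' (cA E)) (k : hom Z Z') :
  z' ∘ k = ha u ∘ z -> z' ∘ k = r ∘ (nu ∘ z).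
Proof. intro Ez. rewrite comp_assoc, r_nu. exact Ez. Qed.

Definition wcs_hom_along : wcs_hom wcs_along E :=
  @Build_wcs_hom C wcs_along E r (hf u) (hg u) (hh u)
    (factor_sq (hx u)) (factor_sq (hy u)) (factor_sq (hw u)).

End Factor.

Variable mu : hom (PBo K (cW D) (cX D) (cY D)) Ct.

Lemma wcs_along_is_mult :
  mu ∘ sqL K (cW D) (cX D) (cY D) = nu ∘ copair3 K (cw D) (cx D) (cy D) ->
  is_mult K wcs_along mu.
Proof. intro E. apply is_mult_sqL. simpl. rewrite E. apply copair3_comp. Qed.

Hypothesis pushout_mu_nu :
  is_pushout (sqL K (cW D) (cX D) (cY D)) (copair3 K (cw D) (cx D) (cy D)) mu nu.

Lemma wcs_unit_universal (Hm : is_mult K wcs_along mu) (M : mcs K)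
  (u : wcs_hom D (mc M)) :
  exists! v : mcs_hom (Build_mcs Hm) M, wcs_comp (mw v) wcs_unit = u.
Proof.
  destruct (proj2 pushout_mu_nu _ _ _ (mult_pbmap_sqL u))
    as [r [[r_mu r_nu] r_uniq]].
  exists (@Build_mcs_hom C K (Build_mcs Hm) M (wcs_hom_along r_nu) r_mu). split.
  - apply wcs_comp_unit. simpl. auto.
  - intros v Ev. apply wcs_comp_unit in Ev as (Ea & Ef & Eg & Eh).
    apply mcs_hom_eq, wcs_hom_eq; simpl; auto.
    apply r_uniq. split; [|exact Ea].
    rewrite <- Ef, <- Eg, <- Eh. exact (mcomm v).
Qed.

End Unit.

Theorem theorem3p1 (C : Cat) (K : PFLC C) (D : wcs C) (Ct : C)
  (nu : hom (cA D) Ct) (mu : hom (PBo K (cW D) (cX D) (cY D)) Ct) :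
  is_pushout (sqL K (cW D) (cX D) (cY D)) (copair3 K (cw D) (cx D) (cy D)) mu nu ->
  let Dt : wcs C := {| cA := Ct; cX := cX D; cx := nu ∘ cx D;
                       cY := cY D; cy := nu ∘ cy D;
                       cW := cW D; cw := nu ∘ cw D |} in
  exists (Hm : is_mult K Dt mu) (eta : wcs_hom D Dt),
    ha eta = nu /\ hf eta = idm (cX D) /\ hg eta = idm (cY D) /\ hh eta = idm (cW D) /\
    forall (M : mcs K) (u : wcs_hom D (mc M)),
      exists! v : mcs_hom (Build_mcs Hm) M, wcs_comp (mw v) eta = u.
Proof.
  intros Hpo Dt.
  exists (wcs_along_is_mult (proj1 Hpo)), (wcs_unit nu).
  repeat split.
  apply wcs_unit_universal, Hpo.
Qed.
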